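(* For any $p>\sqrt{1/2}$ there is $c=c(p)<\infty$ and an oracle routing algorithm between the two roots of $TT_n$ in $TT_{n,p}$ whose average (expected) routing complexity is at most $cn$.
   Context: The double binary tree $TT_n$ is obtained by taking two complete binary trees of uniform depth $n$ and identifying their corresponding leaves; its roots are the roots of the two trees. $TT_{n,p}$ is the random subgraph in which each edge is open independently with probability $p$. An oracle routing algorithm may probe whether any edge of the graph is open (no locality restriction) and outputs an open path between the two given vertices if one exists. Its routing complexity is the number of probes made until a path is found, conditioned on the event that the two vertices are connected by an open path. *)

From mathcomp Require Import all_boot all_order all_algebra.
From mathcomp Require Import boolp.
Set Implicit Arguments. Unset Strict Implicit. Unset Printing Implicit Defensive.
Import Order.TTheory GRing.Theory Num.Theory.

(* ---------- The double binary tree TT_n ----------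
   A node of a complete binary tree of depth n is (k, i) with k <= n the depth
   and i < 2^k its index at that depth (children of (k,i) are (k+1,2i),(k+1,2i+1)).
   A vertex of TT_n is (b, k, i) with b : bool naming which of the two trees;
   the leaves (depth n) of the two trees are identified, which we implement by
   the canonicalisation [vtx]. *)

Definition vertex := (bool * nat * nat)%type.

Definition vtx (n : nat) (v : vertex) : vertex :=
  if v.1.2 == n then (true, v.1.2, v.2) else v.

Definition root1 (n : nat) : vertex := vtx n (true, 0, 0).
Definition root2 (n : nat) : vertex := vtx n (false, 0, 0).

(* Edges: edge (b,k,i) with 1 <= k <= n, i < 2^k joins node (k,i) of tree b
   to its parent (k-1, i/2). *)
Definition is_edge (n : nat) (x : bool * 'I_n.+1 * 'I_(2 ^ n)) : bool :=
  (0 < x.1.2) && (x.2 < 2 ^ x.1.2).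

Definition edge (n : nat) := {x : bool * 'I_n.+1 * 'I_(2 ^ n) | is_edge x}.

Definition ends (n : nat) (e : edge n) : vertex * vertex :=
  let x := val e in
  (vtx n (x.1.1, (x.1.2 : nat).-1, (x.2 : nat) %/ 2),
   vtx n (x.1.1, (x.1.2 : nat), (x.2 : nat))).

Definition adj (n : nat) (S : pred (edge n)) : rel vertex :=
  fun u v => [exists e : edge n, S e && ((ends e == (u, v)) || (ends e == (v, u)))].

Definition roots_connected (n : nat) (S : pred (edge n)) : Prop :=
  exists s : seq vertex, path (adj S) (root1 n) s && (last (root1 n) s == root2 n).

Definition config (n : nat) := {ffun edge n -> bool}.

Definition prob {R : numDomainType} (p : R) (n : nat) (w : config n) : R :=
  \prod_(e : edge n) (if w e then p else 1 - p).

Definition open_conn (n : nat) (w : config n) : Prop :=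
  roots_connected (fun e => w e).

(* ---------- Oracle routing algorithms ----------
   A deterministic adaptive algorithm: given the history of probes (edge probed,
   answer open/closed), either probes a further edge (Some e) or stops (None).
   Any edge of the graph may be probed (no locality restriction). *)
Definition strategy (n : nat) := seq (edge n * bool) -> option (edge n).

Fixpoint history (n : nat) (A : strategy n) (w : config n) (t : nat)
  : seq (edge n * bool) :=
  match t with
  | 0 => [::]
  | t'.+1 =>
      let h := history A w t' in
      match A h with
      | Some e => rcons h (e, w e)
      | None => h
      end
  end.

Definition revealed_open (n : nat) (h : seq (edge n * bool)) : pred (edge n) :=
  fun e => (e, true) \in h.

Definition routes_in (n : nat) (A : strategy n) (w : config n) (T : nat) : Prop :=
  [/\ forall t, t < T -> A (history A w t) <> None,
      A (history A w T) = None &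
      roots_connected (revealed_open (history A w T))].

From Pilot Require Import Defs.
From mathcomp Require Import all_boot all_order all_algebra.
From mathcomp Require Import boolp zify.
From mathcomp.algebra_tactics Require Import ring lra.
Import Order.TTheory GRing.Theory Num.Theory.
Set Implicit Arguments. Unset Strict Implicit. Unset Printing Implicit Defensive.

(* Call two edges mirrored if they are the copies in the two trees of the same
   tree edge. The subtrees hanging from the two copies of a node meet only at
   their common leaves, so the roots are connected iff some leaf is joined to both
   roots by mirrored open paths; otherwise a colouring preserved by open edges
   separates the roots. The algorithm is the depth-first search for such a leaf in
   the tree of mirrored pairs, each open with probability p^2: a Galton-Watson
   tree with offspring law Bin(2, p^2), supercritical as 2 p^2 > 1. By induction on
   the height h, the search succeeds with probability at least 1 - d^2, where
   d = (1 - p^2) / p^2 < 1, a failed search costs O(1) probes on average, and a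
   successful one costs at most K h times its probability; at h = n this bounds
   the conditional expected cost by K n. *)

Inductive dtree (T : Type) := Leaf of bool | Node of T & dtree T & dtree T.
Arguments Leaf {T}.

Section DecisionTrees.
Variable T : Type.
Implicit Types (W : T -> bool) (D : pred T) (t : dtree T).

Fixpoint probes W t : seq T :=
  if t is Node x t0 t1 then x :: probes W (if W x then t1 else t0) else [::].

Fixpoint outcome W t : bool :=
  match t with Leaf b => b | Node x t0 t1 => outcome W (if W x then t1 else t0) end.

Fixpoint dtree_bind t (k : bool -> dtree T) : dtree T :=
  match t with
  | Leaf b => k b
  | Node x t0 t1 => Node x (dtree_bind t0 k) (dtree_bind t1 k)
  end.

Definition probe x t := Node x (Leaf false) t.

Definition dtree_or t1 t2 := dtree_bind t1 (fun r => if r then Leaf true else t2).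

Lemma probes_bind W t k :
  probes W (dtree_bind t k) = probes W t ++ probes W (k (outcome W t)).
Proof. by elim: t => //= x t0 IH0 t1 IH1; case: (W x); rewrite /= ?IH0 ?IH1. Qed.

Lemma outcome_bind W t k : outcome W (dtree_bind t k) = outcome W (k (outcome W t)).
Proof. by elim: t => //= x t0 IH0 t1 IH1; case: (W x); rewrite /= ?IH0 ?IH1. Qed.

Lemma outcome_probe W x t : outcome W (probe x t) = W x && outcome W t.
Proof. by rewrite /=; case: (W x). Qed.

Lemma probes_probe W x t :
  probes W (probe x t) = x :: (if W x then probes W t else [::]).
Proof. by rewrite /=; case: (W x). Qed.

Lemma outcome_or W t1 t2 : outcome W (dtree_or t1 t2) = outcome W t1 || outcome W t2.
Proof. by rewrite outcome_bind; case: (outcome W t1). Qed.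

Lemma probes_or W t1 t2 : probes W (dtree_or t1 t2) =
  probes W t1 ++ (if outcome W t1 then [::] else probes W t2).
Proof. by rewrite probes_bind; case: (outcome W t1). Qed.

Fixpoint dtree_on D t : bool :=
  if t is Node x t0 t1 then [&& D x, dtree_on D t0 & dtree_on D t1] else true.

Lemma dtree_on_sub D D' t : (forall x, D x -> D' x) -> dtree_on D t -> dtree_on D' t.
Proof.
by move=> sDD'; elim: t => //= x t0 IH0 t1 IH1 /and3P[/sDD' -> /IH0 -> /IH1 ->].
Qed.

Lemma dtree_on_bind D t k :
  dtree_on D t -> (forall b, dtree_on D (k b)) -> dtree_on D (dtree_bind t k).
Proof. by move=> + onk; elim: t => //= x t0 IH0 t1 IH1 /and3P[-> /IH0 -> /IH1 ->]. Qed.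

Lemma dtree_on_agree D t W W' : dtree_on D t -> (forall x, D x -> W x = W' x) ->
  outcome W t = outcome W' t /\ probes W t = probes W' t.
Proof.
move=> + eqWW'; elim: t => //= x t0 IH0 t1 IH1 /and3P[Dx on0 on1].
by rewrite -eqWW' //; case: (W x); [have [-> ->] := IH1 on1 | have [-> ->] := IH0 on0].
Qed.

End DecisionTrees.

Definition open_probed (T : eqType) (W : T -> bool) (t : dtree T) : pred T :=
  fun x => (x \in probes W t) && W x.

Lemma open_probed_orl (T : eqType) (W : T -> bool) t1 t2 x :
  open_probed W t1 x -> open_probed W (dtree_or t1 t2) x.
Proof. by case/andP=> x_t1 Wx; rewrite /open_probed probes_or mem_cat x_t1 Wx. Qed.

Lemma open_probed_orr (T : eqType) (W : T -> bool) t1 t2 x :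
  ~~ outcome W t1 -> open_probed W t2 x -> open_probed W (dtree_or t1 t2) x.
Proof.
move=> /negbTE fail1 /andP[x_t2 Wx].
by rewrite /open_probed probes_or fail1 mem_cat x_t2 Wx orbT.
Qed.

Lemma take_probes (T : eqType) (W W' : T -> bool) t m :
  {in take m (probes W t), W =1 W'} -> take m.+1 (probes W' t) = take m.+1 (probes W t).
Proof.
elim: t m => //= x t0 IH0 t1 IH1 [|m] eqWW'; first by rewrite !take0.
have -> : W' x = W x by rewrite eqWW' // inE eqxx.
by congr (_ :: _); case: (W x) eqWW' => eqWW'; [apply: IH1 | apply: IH0];
  move=> y ys; apply: eqWW'; rewrite inE ys orbT.
Qed.

Lemma onth_take (T : Type) (s : seq T) k m : m < k -> onth (take k s) m = onth s m.
Proof. by move=> lt_mk; rewrite !onthE map_take nth_take. Qed.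

Lemma take_onth_rcons (T : Type) (s : seq T) m x :
  onth s m = Some x -> take m.+1 s = rcons (take m s) x.
Proof. by elim: s m => [|y s IH] [|m] //= => [[->]|/IH ->]; rewrite ?take0. Qed.

Section Strategies.
Variable n : nat.
Implicit Types (t : dtree (edge n)) (w : config n).

(* Replay [t] on the answers in [h], reading unrevealed edges as closed: the
   replayed trail starts with the [size h] probes already made, so its entry at
   position [size h] is the next probe. *)
Definition dtree_strategy t : strategy n :=
  fun h => onth (probes (revealed_open h) t) (size h).

Lemma revealed_openE w s e :
  revealed_open [seq (x, w x) | x <- s] e = (e \in s) && w e.
Proof.
apply/mapP/andP => [[x xs [-> wx]] | [es we]]; first by rewrite xs -wx.
by exists e; rewrite // we.
Qed.

Lemma dtree_strategy_next w t m : m <= size (probes w t) ->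
  dtree_strategy t [seq (e, w e) | e <- take m (probes w t)] = onth (probes w t) m.
Proof.
move=> le_m; rewrite /dtree_strategy size_map size_take_min (minn_idPl le_m).
set h := [seq (e, w e) | e <- take m (probes w t)].
have agree : {in take m (probes w t), w =1 revealed_open h}.
  by move=> e e_in; rewrite revealed_openE e_in.
by rewrite -(onth_take _ (ltnSn m)) (take_probes agree) onth_take.
Qed.

Lemma history_dtree_strategy w t m : m <= size (probes w t) ->
  history (dtree_strategy t) w m = [seq (e, w e) | e <- take m (probes w t)].
Proof.
elim: m => [|m IH] le_m /=; first by rewrite take0.
rewrite IH ?(ltnW le_m) // dtree_strategy_next ?(ltnW le_m) //.
case probe_m: (onth (probes w t) m) (onthTE (probes w t) m) => [e|]; last by rewrite le_m.
by rewrite (take_onth_rcons probe_m) map_rcons.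
Qed.

Lemma dtree_strategy_routes w t :
  roots_connected (open_probed w t) ->
  routes_in (dtree_strategy t) w (size (probes w t)).
Proof.
move=> conn; split.
- move=> m lt_m; have le_m := ltnW lt_m.
  rewrite history_dtree_strategy // dtree_strategy_next //.
  by case: (onth _ m) (onthTE (probes w t) m) => //; rewrite lt_m.
- by rewrite history_dtree_strategy // dtree_strategy_next // onth_default.
- rewrite history_dtree_strategy // take_size.
  rewrite (_ : revealed_open _ = open_probed w t) //.
  by apply/funext => e; apply: revealed_openE.
Qed.

End Strategies.

Section DoubleTree.
Variable n : nat.
Implicit Types (W S : pred (edge n)) (e : edge n) (t : dtree (edge n)).

Definition edge_tree e : bool := (val e).1.1.
Definition edge_depth e : nat := (val e).1.2.
Definition edge_index e : nat := (val e).2.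

Definition edge_at (x : bool * nat * nat) : option (edge n) :=
  if (insub x.1.2 : option 'I_n.+1) is Some k then
  if (insub x.2 : option 'I_(2 ^ n)) is Some i then insub (x.1.1, k, i) else None
  else None.

Lemma edge_atE e : edge_at (edge_tree e, edge_depth e, edge_index e) = Some e.
Proof.
case: e => [[[b k] i] is_e].
by rewrite /edge_at /edge_tree /edge_depth /edge_index /= !valK insubT.
Qed.

Lemma edge_atP x e : edge_at x = Some e -> x = (edge_tree e, edge_depth e, edge_index e).
Proof.
case: x => [[b k] i]; rewrite /edge_at /=.
case: insubP => // k' _ <-; case: insubP => // i' _ <-.
by case: insubP => // e' _ e'E [<-]; rewrite /edge_tree /edge_depth /edge_index e'E.
Qed.

Lemma edge_bounds e : 0 < edge_depth e <= n /\ edge_index e < 2 ^ edge_depth e.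
Proof.
case: e => [[[b k] i] /= is_e]; rewrite /edge_depth /edge_index /=.
by case/andP: is_e => /= -> ->; rewrite -ltnS ltn_ord.
Qed.

Lemma edge_at_exists b k i :
  0 < k <= n -> i < 2 ^ k -> exists e, edge_at (b, k, i) = Some e.
Proof.
move=> /andP[k_gt0 le_kn] lt_i.
have lt_k : k < n.+1 by lia.
have lt_i' : i < 2 ^ n by apply: leq_trans lt_i _; rewrite leq_pexp2l.
rewrite /edge_at /= (insubT (fun k => k < n.+1) lt_k).
rewrite (insubT (fun i => i < 2 ^ n) lt_i') /=.
have is_e : is_edge (b, Ordinal lt_k, Ordinal lt_i') by rewrite /is_edge /= k_gt0 lt_i.
by rewrite (insubT _ is_e); eexists.
Qed.

Lemma ends_edge_at b k i e : edge_at (b, k, i) = Some e ->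
  ends e = (vtx n (b, k.-1, i %/ 2), vtx n (b, k, i)).
Proof. by move=> /edge_atP[-> -> ->]. Qed.

Definition open_at W x := if edge_at x is Some e then W e else false.

Lemma open_at_edge W e : open_at W (edge_tree e, edge_depth e, edge_index e) = W e.
Proof. by rewrite /open_at edge_atE. Qed.

Definition linked S u v := exists s, path (adj S) u s && (last u s == v).

Lemma linked_refl S u : linked S u u.
Proof. by exists [::]; rewrite /= eqxx. Qed.

Lemma linked_trans S u v x : linked S u v -> linked S v x -> linked S u x.
Proof.
move=> [s1 /andP[p1 /eqP l1]] [s2 /andP[p2 l2]]; exists (s1 ++ s2).
by rewrite cat_path last_cat p1 l1 p2.
Qed.

Lemma adj_sub S S' : (forall e, S e -> S' e) -> subrel (adj S) (adj S').
Proof.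
by move=> sSS' u v /existsP[e /andP[Se uv]]; apply/existsP; exists e; rewrite sSS'.
Qed.

Lemma linked_sub S S' u v : (forall e, S e -> S' e) -> linked S u v -> linked S' u v.
Proof.
move=> sSS' [s /andP[p l]]; exists s; rewrite l andbT.
by apply: sub_path p; apply: adj_sub.
Qed.

Lemma linked_adj S u v : adj S u v -> linked S u v.
Proof. by move=> uv; exists [:: v]; rewrite /= uv eqxx. Qed.

Lemma linked_ends S e :
  S e -> linked S (ends e).1 (ends e).2 /\ linked S (ends e).2 (ends e).1.
Proof.
move=> Se; split; apply: linked_adj; apply/existsP; exists e; rewrite Se.
  by case: (ends e) => u v; rewrite eqxx.
by case: (ends e) => u v; rewrite eqxx orbT.
Qed.

Definition probe_at x t := if edge_at x is Some e then probe e t else Leaf false.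

Definition mirror_probe k i t := probe_at (true, k, i) (probe_at (false, k, i) t).

Fixpoint mirror_dfs h k i :=
  if h is h'.+1 then
    dtree_or (mirror_probe k.+1 (2 * i) (mirror_dfs h' k.+1 (2 * i)))
             (mirror_probe k.+1 (2 * i).+1 (mirror_dfs h' k.+1 (2 * i).+1))
  else Leaf true.

Lemma mirror_probeE k i t e1 e2 :
  edge_at (true, k, i) = Some e1 -> edge_at (false, k, i) = Some e2 ->
  mirror_probe k i t = probe e1 (probe e2 t).
Proof. by rewrite /mirror_probe /probe_at => -> ->. Qed.

Definition subtree_edge k j e :=
  (k <= edge_depth e) && (edge_index e %/ 2 ^ (edge_depth e - k) == j).

Definition below_node k j e :=
  (k < edge_depth e) && (edge_index e %/ 2 ^ (edge_depth e - k) == j).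

Lemma below_node_subtree k j e : below_node k j e -> subtree_edge k j e.
Proof. by case/andP=> lt_k idx; rewrite /subtree_edge idx ltnW. Qed.

Lemma subtree_below_parent k j e : subtree_edge k.+1 j e -> below_node k (j %/ 2) e.
Proof.
case/andP=> le_k /eqP <-; rewrite /below_node le_k /=.
by rewrite (_ : edge_depth e - k = (edge_depth e - k.+1).+1) ?expnSr ?divnMA //; lia.
Qed.

Lemma subtree_edge_at b k j e : edge_at (b, k, j) = Some e -> subtree_edge k j e.
Proof. by case/edge_atP=> _ -> ->; rewrite /subtree_edge leqnn subnn divn1 eqxx. Qed.

Lemma subtree_siblings k i e :
  subtree_edge k.+1 (2 * i).+1 e -> ~~ subtree_edge k.+1 (2 * i) e.
Proof.
by rewrite /subtree_edge => /andP[_ /eqP ->]; rewrite negb_and; apply/orP; right; lia.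
Qed.

Lemma dtree_on_mirror_probe k j t :
  dtree_on (below_node k j) t -> dtree_on (subtree_edge k j) (mirror_probe k j t).
Proof.
move=> t_below; rewrite /mirror_probe /probe_at.
case e1E: (edge_at (true, k, j)) => [e1|] //=; rewrite (subtree_edge_at e1E) /=.
case e2E: (edge_at (false, k, j)) => [e2|] //=; rewrite (subtree_edge_at e2E) /=.
exact: dtree_on_sub (@below_node_subtree k j) t_below.
Qed.

Lemma dtree_on_mirror_dfs h k i : dtree_on (below_node k i) (mirror_dfs h k i).
Proof.
elim: h k i => [//|h IH] k i /=.
have half_l : (2 * i) %/ 2 = i by lia.
have half_r : (2 * i).+1 %/ 2 = i by lia.
apply: dtree_on_bind => [|[//|]];
  apply: dtree_on_sub (dtree_on_mirror_probe (IH _ _)) => e /subtree_below_parent.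
  by rewrite half_l.
by rewrite half_r.
Qed.

Definition mirror_open W k i := open_at W (true, k, i) && open_at W (false, k, i).

Lemma outcome_mirror_probe W k i t :
  outcome W (mirror_probe k i t) = mirror_open W k i && outcome W t.
Proof.
rewrite /mirror_probe /mirror_open /probe_at /open_at.
case: (edge_at (true, k, i)) => [e1|] //; case: (edge_at (false, k, i)) => [e2|].
  by rewrite !outcome_probe andbA.
by rewrite outcome_probe /= !andbF.
Qed.

Lemma mirror_probe_linked W k i j t : k < n -> j %/ 2 = i -> j < 2 ^ k.+1 ->
  outcome W (mirror_probe k.+1 j t) ->
  (outcome W t ->
     linked (open_probed W t) (vtx n (true, k.+1, j)) (vtx n (false, k.+1, j))) ->
  linked (open_probed W (mirror_probe k.+1 j t)) (vtx n (true, k, i)) (vtx n (false, k, i)).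
Proof.
move=> lt_kn ji lt_j ok link_t.
have k_range : 0 < k.+1 <= n by lia.
have [e1 e1E] := edge_at_exists true k_range lt_j.
have [e2 e2E] := edge_at_exists false k_range lt_j.
move: ok; rewrite (mirror_probeE _ e1E e2E) !outcome_probe => /and3P[o1 o2 ot].
have S1 : open_probed W (probe e1 (probe e2 t)) e1.
  by rewrite /open_probed probes_probe inE eqxx.
have S2 : open_probed W (probe e1 (probe e2 t)) e2.
  by rewrite /open_probed !probes_probe o1 !inE eqxx orbT.
have [down1 _] := linked_ends S1; have [_ up2] := linked_ends S2.
rewrite (ends_edge_at e1E) /= ji in down1; rewrite (ends_edge_at e2E) /= ji in up2.
apply: linked_trans down1 _; apply: linked_trans up2.
apply: linked_sub (link_t ot) => e /andP[e_t We].
by rewrite /open_probed !probes_probe o1 o2 !inE e_t We !orbT.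
Qed.

Lemma mirror_dfs_linked W h k i : k + h = n -> i < 2 ^ k ->
  outcome W (mirror_dfs h k i) ->
  linked (open_probed W (mirror_dfs h k i)) (vtx n (true, k, i)) (vtx n (false, k, i)).
Proof.
elim: h k i => [|h IH] k i khn lt_i.
  by rewrite addn0 in khn; rewrite /vtx /= khn eqxx => _; apply: linked_refl.
have khn' : k.+1 + h = n by lia.
have lt_l : 2 * i < 2 ^ k.+1 by rewrite expnS; lia.
have lt_r : (2 * i).+1 < 2 ^ k.+1 by rewrite expnS; lia.
rewrite /= outcome_or; have [ol _ | fl /= or] := boolP (outcome W (mirror_probe _ _ _)).
  apply: linked_sub (fun e => @open_probed_orl _ W _ _ e) _.
  by apply: mirror_probe_linked ol (IH _ _ khn' lt_l) => //; lia.
apply: linked_sub (fun e => @open_probed_orr _ W _ _ e fl) _.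
by apply: mirror_probe_linked or (IH _ _ khn' lt_r) => //; lia.
Qed.

Fixpoint mirror_path W k i :=
  if k is k'.+1 then mirror_open W k i && mirror_path W k' (i %/ 2) else true.

Lemma mirror_path_ancestor W k m l :
  mirror_path W (k + m) l -> mirror_path W k (l %/ 2 ^ m).
Proof.
elim: m l => [|m IH] l; first by rewrite addn0 expn0 divn1.
by rewrite addnS /= => /andP[_ /IH]; rewrite -divnMA -expnS.
Qed.

Lemma mirror_path_outcome W h k l : k + h = n ->
  mirror_path W (k + h) l -> outcome W (mirror_dfs h k (l %/ 2 ^ h)).
Proof.
elim: h k => [//|h IH] k khn; rewrite addnS -addSn => path_l.
have khn' : k.+1 + h = n by lia.
set j := l %/ 2 ^ h.
have [open_j _] : mirror_open W k.+1 j /\ _ := andP (mirror_path_ancestor path_l).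
have sub_j := IH _ khn' path_l.
have -> : l %/ 2 ^ h.+1 = j %/ 2 by rewrite -divnMA -expnSr.
rewrite /= outcome_or !outcome_mirror_probe.
have [j_even | j_odd] : j = 2 * (j %/ 2) \/ j = (2 * (j %/ 2)).+1 by lia.
  by rewrite -j_even open_j sub_j.
by rewrite -j_odd open_j sub_j orbT.
Qed.

(* Colours of the two copies of the node [(k, i)], chosen so that open edges join
   vertices of equal colour while the roots get different colours. *)
Fixpoint colours W k i : bool * bool :=
  if k is k'.+1 then
    let c := colours W k' (i %/ 2) in
    if mirror_open W k i then c
    else if open_at W (true, k, i) then (c.1, c.1) else (c.2, c.2)
  else (true, false).

Lemma colours_eq W k i : ~~ mirror_path W k i -> (colours W k i).1 = (colours W k i).2.
Proof.
elim: k i => [//|k IH] i /=.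
by case: (mirror_open W k.+1 i) => /= [/IH | _]; last case: open_at.
Qed.

Definition colour W (v : vertex) :=
  if v.1.1 then (colours W v.1.2 v.2).1 else (colours W v.1.2 v.2).2.

Lemma colour_ends W e : W e -> ~~ outcome W (mirror_dfs n 0 0) ->
  colour W (ends e).1 = colour W (ends e).2.
Proof.
move=> We fail; have [/andP[depth_gt0 le_depth] lt_index] := edge_bounds e.
have -> : ends e = (vtx n (edge_tree e, (edge_depth e).-1, edge_index e %/ 2),
                    vtx n (edge_tree e, edge_depth e, edge_index e)) by [].
have -> : vtx n (edge_tree e, (edge_depth e).-1, edge_index e %/ 2) =
          (edge_tree e, (edge_depth e).-1, edge_index e %/ 2).
  by rewrite /vtx /=; case: eqP => //; lia.
have -> : colour W (vtx n (edge_tree e, edge_depth e, edge_index e)) =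
          colour W (edge_tree e, edge_depth e, edge_index e).
  rewrite /vtx /=; case: eqP => // depth_n.
  have no_path : ~~ mirror_path W (edge_depth e) (edge_index e).
    apply: contra fail; rewrite depth_n in lt_index * => path_e.
    have := @mirror_path_outcome W n 0 (edge_index e) (add0n n).
    by rewrite add0n divn_small //; apply.
  by rewrite /colour /= (colours_eq no_path); case: (edge_tree e).
move: (open_at_edge W e); rewrite We /colour /=.
case: (edge_depth e) depth_gt0 => [//|k] _ /=; rewrite /mirror_open.
by case: (edge_tree e) => ->; case: open_at.
Qed.

Lemma colour_path W s u : ~~ outcome W (mirror_dfs n 0 0) ->
  path (adj W) u s -> colour W (last u s) = colour W u.
Proof.
move=> fail; elim: s u => [//|v s IH] u /= /andP[/existsP[e /andP[We uv]] /IH ->].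
by have := colour_ends We fail; case/orP: uv => /eqP ->.
Qed.

Lemma mirror_dfs_complete W : roots_connected W -> outcome W (mirror_dfs n 0 0).
Proof.
have [n0 _|n_gt0 [s /andP[p /eqP l]]] := posnP n; first by rewrite [in mirror_dfs n]n0.
apply: contraT => fail; have := colour_path fail p.
by rewrite l /Defs.root1 /root2 /vtx /=; case: eqP => //; lia.
Qed.

Lemma mirror_dfs_sound W : outcome W (mirror_dfs n 0 0) ->
  roots_connected (open_probed W (mirror_dfs n 0 0)).
Proof. exact: (@mirror_dfs_linked W n 0 0). Qed.

End DoubleTree.

Local Open Scope ring_scope.

Section BernoulliProduct.
Variables (I : finType) (R : numDomainType) (p : R).
Implicit Types (w : {ffun I -> bool}) (f g : {ffun I -> bool} -> R) (D : pred I).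

Definition weight w : R := \prod_i (if w i then p else 1 - p).

Definition expect f : R := \sum_w weight w * f w.

Definition depends_on (T : Type) (f : {ffun I -> bool} -> T) D :=
  forall w w', (forall i, D i -> w i = w' i) -> f w = f w'.

Lemma depends_on_sub (T : Type) (f : {ffun I -> bool} -> T) D D' :
  (forall i, D i -> D' i) -> depends_on f D -> depends_on f D'.
Proof. by move=> sDD' fD w w' eqww'; apply: fD => i /sDD'; apply: eqww'. Qed.

Lemma eq_expect f g : f =1 g -> expect f = expect g.
Proof. by move=> eqfg; apply: eq_bigr => w _; rewrite eqfg. Qed.

Lemma expectD f g : expect (fun w => f w + g w) = expect f + expect g.
Proof. by rewrite /expect -big_split; apply: eq_bigr => w _; rewrite mulrDr. Qed.

Lemma expectZ c f : expect (fun w => c * f w) = c * expect f.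
Proof. by rewrite /expect mulr_sumr; apply: eq_bigr => w _; rewrite mulrCA. Qed.

Lemma expectB f g : expect (fun w => f w - g w) = expect f - expect g.
Proof.
rewrite (eq_expect (g := fun w => f w + (-1) * g w)) => [|w]; last by ring.
by rewrite expectD expectZ mulN1r.
Qed.

Lemma expect_cst c : expect (fun _ => c) = c.
Proof.
have weight_sum : \sum_w weight w = 1.
  rewrite /weight -(bigA_distr_bigA (fun _ (b : bool) => if b then p else 1 - p)) /=.
  by apply: big1 => i _; rewrite big_bool /= addrC subrK.
by rewrite /expect -mulr_suml weight_sum mul1r.
Qed.

Lemma expect_indicatorM (b : pred {ffun I -> bool}) f :
  expect (fun w => f w * (b w)%:R) = \sum_(w | b w) weight w * f w.
Proof.
by rewrite [RHS]big_mkcond; apply: eq_bigr => w _; case: (b w); rewrite ?mulr1 ?mulr0.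
Qed.

Lemma expect_indicator (b : pred {ffun I -> bool}) :
  expect (fun w => (b w)%:R) = \sum_(w | b w) weight w.
Proof.
rewrite -(eq_expect (f := fun w => 1 * (b w)%:R)) => [|w]; last exact: mul1r.
by rewrite expect_indicatorM; apply: eq_bigr => w _; rewrite mulr1.
Qed.

Definition assign i b w : {ffun I -> bool} := [ffun j => if j == i then b else w j].

Section Conditioning.
Variable i : I.
Let other_weight w := \prod_(j | j != i) (if w j then p else 1 - p).
Let flip w := assign i (~~ w i) w.

Lemma assignE b w j : assign i b w j = if j == i then b else w j.
Proof. by rewrite ffunE. Qed.

Lemma flipK : involutive flip.
Proof.
by move=> w; apply/ffunP => j; rewrite !assignE eqxx; case: eqP => [->|]; rewrite ?negbK.
Qed.

Lemma weightE w : weight w = (if w i then p else 1 - p) * other_weight w.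
Proof. by rewrite /weight (bigD1 i). Qed.

Lemma other_weight_assign b w : other_weight (assign i b w) = other_weight w.
Proof. by apply: eq_bigr => j /negbTE ji; rewrite assignE ji. Qed.

Lemma assign_id b w : w i = b -> assign i b w = w.
Proof. by move=> wi; apply/ffunP => j; rewrite assignE; case: eqP => // ->. Qed.

Lemma assign_assign b b' w : assign i b (assign i b' w) = assign i b w.
Proof. by apply/ffunP => j; rewrite !assignE; case: eqP. Qed.

Lemma expect_pairs f : expect f =
  \sum_(w : {ffun I -> bool} | w i) other_weight w * (p * f w + (1 - p) * f (flip w)).
Proof.
have flip_i w : flip w i = ~~ w i by rewrite assignE eqxx.
rewrite /expect (bigID (fun w : {ffun I -> bool} => w i)) /=.
rewrite [X in _ + X](reindex_inj (can_inj flipK)) /=.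
rewrite [X in _ + X](eq_bigl (fun w : {ffun I -> bool} => w i)) => [|w].
  2: by rewrite flip_i negbK.
rewrite -big_split /=; apply: eq_bigr => w wi.
by rewrite !weightE flip_i wi /flip other_weight_assign /=; ring.
Qed.

Lemma expect_cond f : expect f = p * expect (fun w => f (assign i true w)) +
                                  (1 - p) * expect (fun w => f (assign i false w)).
Proof.
rewrite !expect_pairs !mulr_sumr -big_split /=; apply: eq_bigr => w wi.
by rewrite /flip wi /= !assign_assign (assign_id (b := true)) //; ring.
Qed.

End Conditioning.

Lemma expect_coord i : expect (fun w => (w i)%:R) = p.
Proof.
have assign_i b : expect (fun w => (assign i b w i)%:R) = b%:R.
  by rewrite -[RHS]expect_cst; apply: eq_expect => w; rewrite assignE eqxx.
by rewrite (expect_cond i) !assign_i mulr1 mulr0 addr0.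
Qed.

Lemma expect_mul_indep D f g : depends_on f D -> depends_on g (predC D) ->
  expect (fun w => f w * g w) = expect f * expect g.
Proof.
move: {2}#|D| (leqnn #|D|) => N; elim: N D f g => [|N IH] D f g.
  move=> le0 fD _.
  have f_cst w : f w = f [ffun => false].
    apply: fD => i Di; suff : (0 < #|D|)%N by rewrite ltnNge le0.
    by rewrite (cardD1 i) [i \in D]Di.
  rewrite (eq_expect f_cst) expect_cst -expectZ.
  by apply: eq_expect => w; rewrite f_cst.
move=> leN fD gD; have [D0|/card_gt0P[i Di]] := posnP #|D|.
  by apply: IH fD gD; rewrite D0.
have Di' : D i := Di.
pose D' : pred I := fun j => (j != i) && D j.
have card_D : #|D| = #|D'|.+1.
  by rewrite (cardD1 i) Di add1n; congr _.+1; apply: eq_card => j; rewrite !inE.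
have g_assign b w : g (assign i b w) = g w.
  by apply: gD => j /= Dj; rewrite assignE; case: eqP => // ji; rewrite ji Di' in Dj.
have fD' b : depends_on (fun w => f (assign i b w)) D'.
  move=> w w' eqww'; apply: fD => j Dj; rewrite !assignE; case: eqP => // /eqP ji.
  by apply: eqww'; rewrite /D' ji Dj.
have gD' : depends_on g (predC D').
  by apply: depends_on_sub gD => j /= Dj; rewrite /D' negb_and Dj orbT.
have indep_at b : expect (fun w => f (assign i b w) * g (assign i b w)) =
                  expect (fun w => f (assign i b w)) * expect g.
  rewrite -(IH D' _ _ _ (fD' b) gD'); last by lia.
  by apply: eq_expect => w; rewrite /= g_assign.
by rewrite (expect_cond i) (expect_cond i f) !indep_at; ring.
Qed.

End BernoulliProduct.

Section DecisionTreeCosts.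
Variables (I : finType) (R : numDomainType) (p : R).
Implicit Types (t : dtree I) (D : pred I) (w : {ffun I -> bool}).
Local Notation expect := (expect p).

Definition success_prob t := expect (fun w => (outcome w t)%:R).

Definition success_cost t :=
  expect (fun w => (size (probes w t))%:R * (outcome w t)%:R).

Definition failure_cost t :=
  expect (fun w => (size (probes w t))%:R * (1 - (outcome w t)%:R)).

Lemma depends_on_dtree (T : Type) (F : bool -> seq I -> T) D t :
  dtree_on D t -> depends_on (fun w => F (outcome w t) (probes w t)) D.
Proof. by move=> tD w w' eqww'; have [-> ->] := dtree_on_agree tD eqww'. Qed.

Lemma expect_coord_mul x g :
  depends_on g (predC1 x) -> expect (fun w => (w x)%:R * g w) = p * expect g.
Proof.
move=> gx; rewrite (expect_mul_indep p (D := pred1 x)) ?expect_coord //.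
by move=> w w' eqww'; rewrite eqww' /=.
Qed.

Lemma expect_probe x t : dtree_on (predC1 x) t ->
  [/\ success_prob (probe x t) = p * success_prob t,
      success_cost (probe x t) = p * (success_prob t + success_cost t)
    & failure_cost (probe x t) = 1 + p * (failure_cost t - success_prob t)].
Proof.
move=> tx; have tdep F := depends_on_dtree F tx.
split.
- rewrite /success_prob (eq_expect p (g := fun w => (w x)%:R * (outcome w t)%:R)) => [|w].
    by rewrite expect_coord_mul //; apply: (tdep _ (fun b _ => b%:R)).
  by rewrite /=; case: (w x); rewrite /= ?mul1r ?mul0r.
- rewrite /success_cost (eq_expect p (g := fun w => (w x)%:R *
    ((outcome w t)%:R + (size (probes w t))%:R * (outcome w t)%:R))) => [|w].
    rewrite expect_coord_mul ?expectD //.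
    by apply: (tdep _ (fun b s => b%:R + (size s)%:R * b%:R)).
  by rewrite /=; case: (w x); rewrite /= ?mulrSr; ring.
- rewrite /failure_cost (eq_expect p (g := fun w => 1 + (w x)%:R *
    ((size (probes w t))%:R * (1 - (outcome w t)%:R) - (outcome w t)%:R))) => [|w].
    rewrite expectD expect_cst expect_coord_mul ?expectB //.
    by apply: (tdep _ (fun b s => (size s)%:R * (1 - b%:R) - b%:R)).
  by rewrite /=; case: (w x); rewrite /= ?mulrSr; ring.
Qed.

Lemma expect_or D t1 t2 : dtree_on D t1 -> dtree_on (predC D) t2 ->
  let u1 := success_prob t1 in let u2 := success_prob t2 in
  [/\ success_prob (dtree_or t1 t2) = u1 + (1 - u1) * u2,
      success_cost (dtree_or t1 t2) =
        success_cost t1 + failure_cost t1 * u2 + (1 - u1) * success_cost t2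
    & failure_cost (dtree_or t1 t2) =
        failure_cost t1 * (1 - u2) + (1 - u1) * failure_cost t2].
Proof.
move=> t1D t2D u1 u2.
have indep F G :
    expect (fun w => F (outcome w t1) (probes w t1) * G (outcome w t2) (probes w t2)) =
    expect (fun w => F (outcome w t1) (probes w t1)) *
    expect (fun w => G (outcome w t2) (probes w t2)).
  exact: expect_mul_indep (depends_on_dtree F t1D) (depends_on_dtree G t2D).
have fail1 : expect (fun w => 1 - (outcome w t1)%:R) = 1 - u1 by rewrite expectB expect_cst.
have fail2 : expect (fun w => 1 - (outcome w t2)%:R) = 1 - u2 by rewrite expectB expect_cst.
split.
- rewrite /success_prob (eq_expect p (g := fun w => (outcome w t1)%:R +
    (1 - (outcome w t1)%:R) * (outcome w t2)%:R)) => [|w].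
    by rewrite expectD (indep (fun b _ => 1 - b%:R) (fun b _ => b%:R)) fail1.
  by rewrite /= outcome_or; case: (outcome w t1); case: (outcome w t2); rewrite /=; ring.
- rewrite /success_cost (eq_expect p (g := fun w =>
    (size (probes w t1))%:R * (outcome w t1)%:R +
    (size (probes w t1))%:R * (1 - (outcome w t1)%:R) * (outcome w t2)%:R +
    (1 - (outcome w t1)%:R) * ((size (probes w t2))%:R * (outcome w t2)%:R))) => [|w].
    rewrite !expectD (indep (fun b s => (size s)%:R * (1 - b%:R)) (fun b _ => b%:R)).
    by rewrite (indep (fun b _ => 1 - b%:R) (fun b s => (size s)%:R * b%:R)) fail1.
  rewrite /= outcome_or probes_or size_cat natrD.
  by case: (outcome w t1); case: (outcome w t2); rewrite /=; ring.
- rewrite /failure_cost (eq_expect p (g := fun w =>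
    (size (probes w t1))%:R * (1 - (outcome w t1)%:R) * (1 - (outcome w t2)%:R) +
    (1 - (outcome w t1)%:R) * ((size (probes w t2))%:R * (1 - (outcome w t2)%:R)))) => [|w].
    rewrite expectD.
    rewrite (indep (fun b s => (size s)%:R * (1 - b%:R)) (fun b _ => 1 - b%:R)) fail2.
    by rewrite (indep (fun b _ => 1 - b%:R) (fun b s => (size s)%:R * (1 - b%:R))) fail1.
  rewrite /= outcome_or probes_or size_cat natrD.
  by case: (outcome w t1); case: (outcome w t2); rewrite /=; ring.
Qed.

End DecisionTreeCosts.

Section ExpectationBounds.
Variables (I : finType) (R : numDomainType) (p : R).
Hypotheses (p_ge0 : 0 <= p) (p_le1 : p <= 1).
Implicit Types (t : dtree I) (w : {ffun I -> bool}) (f g : {ffun I -> bool} -> R).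

Lemma weight_ge0 w : 0 <= weight p w.
Proof. by apply: prodr_ge0 => i _; case: (w i); rewrite ?subr_ge0. Qed.

Lemma ler_expect f g : (forall w, f w <= g w) -> expect p f <= expect p g.
Proof. by move=> le_fg; apply: ler_sum => w _; rewrite ler_wpM2l ?weight_ge0. Qed.

Lemma success_prob_ge0 t : 0 <= success_prob p t.
Proof. by rewrite -(expect_cst I p 0); apply: ler_expect => w; apply: ler0n. Qed.

Lemma success_prob_le1 t : success_prob p t <= 1.
Proof. by rewrite -(expect_cst I p 1); apply: ler_expect => w; rewrite lern1 leq_b1. Qed.

End ExpectationBounds.

Lemma or_step_arith (R : realFieldType) (d M c u1 u2 A1 A2 N1 N2 : R) :
  0 <= d <= 1 -> 0 <= M -> 1 - d <= u1 <= 1 -> 1 - d <= u2 <= 1 ->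
  A1 <= (2 + c) * u1 -> A2 <= (2 + c) * u2 -> N1 <= M -> N2 <= M ->
  [/\ 1 - d ^+ 2 <= u1 + (1 - u1) * u2,
      A1 + N1 * u2 + (1 - u1) * A2 <= (c + M + 2) * (u1 + (1 - u1) * u2)
    & N1 * (1 - u2) + (1 - u1) * N2 <= 2 * M * d].
Proof.
move=> /andP[d0 d1] M0 /andP[lo1 hi1] /andP[lo2 hi2] A1le A2le N1le N2le.
have sq : 0 <= (d - (1 - u1)) * (1 - u2) + d * (d - (1 - u2)).
  by apply: addr_ge0; apply: mulr_ge0; lra.
split; first by rewrite expr2; nra.
  have N1u2 : N1 * u2 <= M * u2 by apply: ler_wpM2r; lra.
  have A2u1 : (1 - u1) * A2 <= (1 - u1) * ((2 + c) * u2) by apply: ler_wpM2l; lra.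
  have u2le : M * u2 <= M * (u1 + (1 - u1) * u2) by apply: ler_wpM2l; nra.
  nra.
have N1u2 : N1 * (1 - u2) <= M * (1 - u2) by apply: ler_wpM2r; lra.
have N2u1 : (1 - u1) * N2 <= (1 - u1) * M by apply: ler_wpM2l; lra.
have Mu2 : M * (1 - u2) <= M * d by apply: ler_wpM2l; lra.
have Mu1 : (1 - u1) * M <= d * M by apply: ler_wpM2r; lra.
lra.
Qed.

Section Analysis.
Variables (R : realFieldType) (p : R).
Hypotheses (p_ge0 : 0 <= p) (p_le1 : p <= 1) (p2_gt : 1 / 2 < p * p).

(* With [q = p^2]: a search succeeding with probability [>= 1 - d^2] behind a
   mirrored pair succeeds with probability [>= q (1 - d^2) = 1 - d], as
   [q d = 1 - q], and two independent such tries both fail with probability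
   [<= d^2]. A failed try costs at most [M = 2 + q B] probes and a failed search
   at most [2 M d], which is [B] itself for the value of [fail_bound]. *)
Definition defect := (1 - p * p) / (p * p).
Definition fail_bound := 4 * defect / (2 * (p * p) - 1).
Definition pair_fail_bound := 2 + p * p * fail_bound.
Definition cost_rate := pair_fail_bound + 2.

Lemma defect_bounds : [/\ 0 <= defect, defect < 1 & p * p * defect = 1 - p * p].
Proof.
have p2_gt0 : 0 < p * p by have := p2_gt; lra.
have p2_defect : p * p * defect = 1 - p * p by rewrite /defect mulrC divfK ?gt_eqF.
have p2_le1 : p * p <= 1 by rewrite -[1]mulr1 ler_pM.
split=> //; last by have := p2_gt; nra.
by rewrite /defect divr_ge0 ?subr_ge0 // ltW.
Qed.

Lemma fail_bound_fixpoint : 0 <= fail_bound /\ 2 * pair_fail_bound * defect = fail_bound.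
Proof.
have [d0 _ p2_defect] := defect_bounds.
have B_den : fail_bound * (2 * (p * p) - 1) = 4 * defect.
  by rewrite /fail_bound divfK // gt_eqF //; have := p2_gt; lra.
split; first by rewrite /fail_bound divr_ge0 //; have := p2_gt; lra.
have : p * p * defect * fail_bound = (1 - p * p) * fail_bound by rewrite p2_defect.
rewrite /pair_fail_bound; nra.
Qed.

Section Invariants.
Variable I : finType.
Implicit Types (t : dtree I).

Definition dfs_invariant t h :=
  [/\ 1 - defect ^+ 2 <= success_prob p t,
      success_cost p t <= cost_rate * h%:R * success_prob p t
    & failure_cost p t <= fail_bound].

Definition pair_invariant t h :=
  [/\ 1 - defect <= success_prob p t <= 1,
      success_cost p t <= (2 + cost_rate * h%:R) * success_prob p t
    & failure_cost p t <= pair_fail_bound].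

Lemma dfs_invariant_leaf : dfs_invariant (Leaf true) 0.
Proof.
have [d0 _ _] := defect_bounds; have [B0 _] := fail_bound_fixpoint.
rewrite /dfs_invariant /success_prob /success_cost /failure_cost /= !expect_cst.
by split; rewrite ?mulr0 ?mul0r // gerBl sqr_ge0.
Qed.

Lemma pair_invariant_probe x1 x2 sub h :
  x1 != x2 -> dtree_on (fun y => (y != x1) && (y != x2)) sub -> dfs_invariant sub h ->
  pair_invariant (probe x1 (probe x2 sub)) h.
Proof.
move=> x12 sub_on [lo cost fail].
have [d0 _ p2_defect] := defect_bounds; have [B0 _] := fail_bound_fixpoint.
have sub_x2 : dtree_on (predC1 x2) sub by apply: dtree_on_sub sub_on => y /andP[].
have probe_x1 : dtree_on (predC1 x1) (probe x2 sub).
  by rewrite /= eq_sym x12; apply: dtree_on_sub sub_on => y /andP[].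
have [s2 c2 f2] := expect_probe p sub_x2; have [s1 c1 f1] := expect_probe p probe_x1.
have s0 := success_prob_ge0 p_ge0 p_le1 sub; have s1le := success_prob_le1 p_ge0 p_le1 sub.
have p2_ge0 : 0 <= p * p by apply: mulr_ge0.
rewrite /pair_invariant s1 c1 f1 s2 c2 f2; split.
- have : 0 <= p * p * (success_prob p sub - (1 - defect ^+ 2)) by apply: mulr_ge0; lra.
  have := p_le1; rewrite expr2; nra.
- have : 0 <= p * p * (cost_rate * h%:R * success_prob p sub - success_cost p sub).
    by apply: mulr_ge0; lra.
  nra.
- have : 0 <= p * p * (fail_bound - failure_cost p sub) by apply: mulr_ge0; lra.
  have := p_le1; rewrite /pair_fail_bound; nra.
Qed.

Lemma dfs_invariant_or D t1 t2 h : dtree_on D t1 -> dtree_on (predC D) t2 ->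
  pair_invariant t1 h -> pair_invariant t2 h -> dfs_invariant (dtree_or t1 t2) h.+1.
Proof.
move=> t1D t2D [u1 A1 N1] [u2 A2 N2].
have [d0 d1 _] := defect_bounds; have [B0 fixB] := fail_bound_fixpoint.
have M0 : 0 <= pair_fail_bound by rewrite /pair_fail_bound; have := p_ge0; nra.
have rate_succ : cost_rate * h.+1%:R = cost_rate * h%:R + pair_fail_bound + 2.
  by rewrite mulrSr /cost_rate; ring.
have [so co fo] := expect_or p t1D t2D.
have [] := or_step_arith (c := cost_rate * h%:R) _ M0 u1 u2 A1 A2 N1 N2.
  by rewrite d0 ltW.
by rewrite /dfs_invariant so co fo fixB rate_succ.
Qed.

End Invariants.

Section MirrorDfs.
Variable n : nat.

Lemma pair_invariant_mirror_probe k j (sub : dtree (edge n)) h :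
  (k < n)%N -> (j < 2 ^ k.+1)%N ->
  dtree_on (below_node k.+1 j) sub -> dfs_invariant sub h ->
  pair_invariant (mirror_probe k.+1 j sub) h.
Proof.
move=> lt_kn lt_j sub_below inv.
have k_range : (0 < k.+1 <= n)%N by lia.
have [e1 e1E] := edge_at_exists true k_range lt_j.
have [e2 e2E] := edge_at_exists false k_range lt_j.
have [tree1 depth1 _] := edge_atP e1E; have [tree2 depth2 _] := edge_atP e2E.
rewrite (mirror_probeE _ e1E e2E); apply: pair_invariant_probe inv.
  by apply/eqP => e12; rewrite e12 -tree2 in tree1.
apply: dtree_on_sub sub_below => e /andP[deep _].
by apply/andP; split; apply/eqP => ee; move: deep; rewrite ee -?depth1 -?depth2 ltnn.
Qed.

Lemma mirror_dfs_invariant h k i : (k + h = n)%N -> (i < 2 ^ k)%N ->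
  dfs_invariant (mirror_dfs n h k i) h.
Proof.
elim: h k i => [|h IH] k i khn lt_i; first exact: dfs_invariant_leaf.
have khn' : (k.+1 + h = n)%N by lia.
have lt_l : (2 * i < 2 ^ k.+1)%N by rewrite expnS; lia.
have lt_r : ((2 * i).+1 < 2 ^ k.+1)%N by rewrite expnS; lia.
have lt_kn : (k < n)%N by lia.
apply: (dfs_invariant_or (D := subtree_edge k.+1 (2 * i)%N)).
- exact: dtree_on_mirror_probe (dtree_on_mirror_dfs _ _ _ _).
- apply: dtree_on_sub (dtree_on_mirror_probe (dtree_on_mirror_dfs _ _ _ _)) => e.
  exact: subtree_siblings.
- exact: pair_invariant_mirror_probe (dtree_on_mirror_dfs _ _ _ _) (IH _ _ khn' lt_l).
- exact: pair_invariant_mirror_probe (dtree_on_mirror_dfs _ _ _ _) (IH _ _ khn' lt_r).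
Qed.

Lemma mirror_dfs_cost_ratio (t := mirror_dfs n n 0 0) :
  success_cost p t / success_prob p t <= cost_rate * n%:R.
Proof.
have [lo cost _] := @mirror_dfs_invariant n 0 0 erefl erefl.
have [d0 d1 _] := defect_bounds.
have pos : 0 < success_prob p (mirror_dfs n n 0 0).
  by apply: lt_le_trans lo; rewrite subr_gt0 expr2; nra.
by rewrite ler_pdivrMr.
Qed.

End MirrorDfs.

End Analysis.

Theorem mainTheorem7 (R : rcfType) (p : R) :
  Num.sqrt (1 / 2) < p -> p <= 1 ->
  exists c : R, forall n : nat,
    exists (A : strategy n) (T : config n -> nat),
      (forall w : config n, open_conn w -> routes_in A w (T w)) /\
      (\sum_(w : config n | `[< open_conn w >]) prob p w * (T w)%:R)
        / (\sum_(w : config n | `[< open_conn w >]) prob p w)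
      <= c * n%:R.
Proof.
move=> sqrt_lt_p p_le1.
have sqrt_ge0 := sqrtr_ge0 (1 / 2 : R).
have p_ge0 : 0 <= p := le_trans sqrt_ge0 (ltW sqrt_lt_p).
have p2_gt : 1 / 2 < p * p.
  have : Num.sqrt (1 / 2 : R) ^+ 2 = 1 / 2 by rewrite sqr_sqrtr // divr_ge0.
  by rewrite expr2; nra.
exists (cost_rate p) => n; set t := mirror_dfs n n 0 0.
exists (dtree_strategy t), (fun w => size (probes w t)); split.
  by move=> w /mirror_dfs_complete/mirror_dfs_sound; apply: dtree_strategy_routes.
have connE (w : config n) : `[< open_conn w >] = outcome w t.
  apply/asboolP/idP => [/mirror_dfs_complete // | /mirror_dfs_sound].
  by apply: linked_sub => e /andP[].
rewrite !(eq_bigl _ _ connE) -expect_indicatorM -expect_indicator.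
exact: mirror_dfs_cost_ratio.
Qed.
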